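(* Consider a parallel system (so $\phi(s)=1$ if and only if $s_k=1$ for at least one $k$), with an arbitrary joint prior distribution of the component states, inspection error rates $\epsilon_{FA},\epsilon_{FS}\in[0,1/2)$ identical for all components, failure cost $C_F>0$ and nonnegative repair costs $C_{R,1},\dots,C_{R,N}$. Then for every component $c_k$, $\mathrm{VoI}_L(k)$ equals the global-metric value of information $\mathrm{VoI}_G(k)$ computed with the concave function $l^*(p)=\min\{C_F\,p,\ \min_m C_{R,m}\}$; consequently, for any two components with $p_i\le p_j$ we have $\mathrm{VoI}_L(i)\ge\mathrm{VoI}_L(j)$, so the most reliable component has the highest local VoI, as under the global metric.
   Context: A system consists of $N$ binary components $c_1,\dots,c_N$ with random joint state $s\in\{0,1\}^N$ ($s_k=1$: working; $s_k=0$: failed), with arbitrary prior distribution; the system state is $u=\phi(s)$ ($u=0$: failure), $p_k=\mathbb{P}[s_k=0]$. Inspecting $c_k$ yields a binary observation $y_k$ (alarm $0$, silence $1$) which, given $s$, depends only on $s_k$, with $\mathbb{P}[y_k=1\mid s_k=0]=\epsilon_{FS}$, $\mathbb{P}[y_k=0\mid s_k=1]=\epsilon_{FA}$; $h_k=\mathbb{P}[y_k=0]$, and $p_{\omega|y_k=b}=\mathbb{P}[u=0\mid y_k=b]$. Local metric: an action is a vector $A=(a_1,\dots,a_N)\in\{0,1\}^N$ ($a_k=1$: replace $c_k$). Replacement is perfect: the post-action state $s'$ has $s'_k=1$ if $a_k=1$ and $s'_k=s_k$ otherwise. The loss is $\mathcal{L}(s',A)=C_F(1-\phi(s'))+\sum_k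 a_kC_{R,k}$. The prior loss is $L^L_\pi=\min_A\mathbb{E}[\mathcal{L}(s',A)]$; the posterior loss given $y_k=c$ is $L^L_{\omega|y_k=c}=\min_A\mathbb{E}[\mathcal{L}(s',A)\mid y_k=c]$; $L^L_\omega(k)=h_kL^L_{\omega|y_k=0}+(1-h_k)L^L_{\omega|y_k=1}$; and $\mathrm{VoI}_L(k)=L^L_\pi-L^L_\omega(k)$. Global metric: for a concave $l^*:[0,1]\to\mathbb{R}$, with $p_\pi=\mathbb{P}[u=0]$, $\mathrm{VoI}_G(k)=l^*(p_\pi)-[h_k\,l^*(p_{\omega|y_k=0})+(1-h_k)\,l^*(p_{\omega|y_k=1})]$ (terms with zero probability omitted). *)

From HB Require Import structures.
From mathcomp Require Import all_boot all_order all_algebra.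
Set Implicit Arguments. Unset Strict Implicit. Unset Printing Implicit Defensive.
Import Order.TTheory GRing.Theory Num.Theory.
Local Open Scope ring_scope.

Section Defs.
Variable R : realFieldType.
Variable N : nat.

(* joint component state s : s k = true means c_k working *)
Definition state := {ffun 'I_N -> bool}.
(* action: A k = true means replace c_k *)
Definition action := {ffun 'I_N -> bool}.

Definition phi_par (s : state) : bool := [exists k, s k].

Definition post (s : state) (A : action) : state := [ffun m => A m || s m].

Definition loss (CF : R) (CR : 'I_N -> R) (s : state) (A : action) : R :=
  CF * (~~ phi_par (post s A))%:R + \sum_(m < N) (A m)%:R * CR m.

(* minimum over all actions (the default element is itself an action,
   so this is exactly min_A F A) *)
Definition minA (F : action -> R) : R :=
  \big[Num.min/F [ffun => false]]_(A : action) F A.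

(* observation likelihood P[y_k = y | s_k = sk]; y = false : alarm (0),
   y = true : silence (1) *)
Definition lik (eFA eFS : R) (y sk : bool) : R :=
  if sk then (if y then 1 - eFA else eFA)
  else (if y then eFS else 1 - eFS).

Variable P : {ffun state -> R}.
Variables eFA eFS CF : R.
Variable CR : 'I_N -> R.

Definition pfail (k : 'I_N) : R := \sum_(s : state) P s * (~~ s k)%:R.

Definition pobs (k : 'I_N) (c : bool) : R :=
  \sum_(s : state) P s * lik eFA eFS c (s k).

Definition L_prior : R := minA (fun A => \sum_(s : state) P s * loss CF CR s A).

Definition L_post (k : 'I_N) (c : bool) : R :=
  minA (fun A => (\sum_(s : state) P s * lik eFA eFS c (s k) * loss CF CR s A)
                 / pobs k c).

(* weighted term, omitted when the conditioning event has zero probability *)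
Definition wterm (w x : R) : R := if w == 0 then 0 else w * x.

Definition L_omega (k : 'I_N) : R :=
  wterm (pobs k false) (L_post k false) + wterm (pobs k true) (L_post k true).

Definition VoI_L (k : 'I_N) : R := L_prior - L_omega k.

Definition p_pi : R := \sum_(s : state) P s * (~~ phi_par s)%:R.

Definition p_post (k : 'I_N) (b : bool) : R :=
  (\sum_(s : state) P s * lik eFA eFS b (s k) * (~~ phi_par s)%:R) / pobs k b.

Definition VoI_G (lstar : R -> R) (k : 'I_N) : R :=
  lstar p_pi - (wterm (pobs k false) (lstar (p_post k false))
                + wterm (pobs k true) (lstar (p_post k true))).

End Defs.

Definition lstar_par (R : realFieldType) (n : nat) (CF : R) (CR : 'I_n.+1 -> R)
  (p : R) : R :=
  Num.min (CF * p) (\big[Num.min/CR ord0]_(m < n.+1) CR m).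

From Pilot Require Import Defs.
From HB Require Import structures.
From mathcomp Require Import all_boot all_order all_algebra.
From mathcomp Require Import lra.
Set Implicit Arguments. Unset Strict Implicit. Unset Printing Implicit Defensive.
Import Order.TTheory GRing.Theory Num.Theory.
Local Open Scope ring_scope.

(* In a parallel system any replacement makes the system work, so among all
   actions only two matter: doing nothing (expected loss C_F times the
   probability that every component has failed) and replacing the cheapest
   component (cost min_m C_{R,m}).  Hence every Bayes risk, prior or
   posterior, is l* of the corresponding failure probability, and the two
   value-of-information metrics coincide.  Moreover a system failure forces
   c_k to have failed, so P[y_k = b, u = 0] = P[y_k = b | s_k = 0] p_pi does
   not depend on k, and the expected posterior loss depends on k only through
   the alarm probability h_k = eFA + (1 - eFS - eFA) p_k.  It equals the best
   of the three policies "never replace", "always replace" and "replace on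
   alarm", whose losses are nondecreasing in h_k, hence in p_k. *)

Lemma minA_le (R : realFieldType) (N : nat) (F : action N -> R) A :
  Defs.minA F <= F A.
Proof. exact: bigmin_le. Qed.

Lemma minA_eq (R : realFieldType) (N : nat) (F : action N -> R) v :
  (forall A, v <= F A) -> (exists A, F A = v) -> Defs.minA F = v.
Proof.
move=> F_ge [A FA]; apply/le_anti/andP; split; first by rewrite -FA minA_le.
by apply/bigmin_geP; split=> [|B _]; apply: F_ge.
Qed.

Lemma eq_minA (R : realFieldType) (N : nat) (F G : action N -> R) :
  F =1 G -> Defs.minA F = Defs.minA G.
Proof. by move=> FG; rewrite /Defs.minA FG; apply: eq_bigr. Qed.

(* Choosing one term from each min gives the four observation-dependent
   policies; the mixed one, "replace on silence", never wins when h <= 1 - e. *)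
Lemma min_add_min_eq_min3 (R : realFieldType) (X c e h : R) :
  0 <= X -> 0 <= c -> 0 <= e -> 0 <= h -> h <= 1 - e ->
  Num.min ((1 - e) * X) (c * h) + Num.min (e * X) (c * (1 - h)) =
  Num.min X (Num.min c (c * h + e * X)).
Proof.
move=> X_ge0 c_ge0 e_ge0 h_ge0 h_le.
have [Xc|cX] := leP X c.
- (* "replace on silence" never beats "never replace" *)
  have eXc : e * X <= c * (1 - h).
    have : e * X <= e * c by rewrite ler_wpM2l.
    have : c * e <= c * (1 - h) by rewrite ler_wpM2l //; lra.
    lra.
  rewrite (min_l eXc) addr_minl minA (min_l Xc).
  by congr Num.min; lra.
- (* "replace on silence" never beats "always replace" *)
  have chX : c * h <= (1 - e) * X.
    have : c * h <= c * (1 - e) by rewrite ler_wpM2l.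
    have : (1 - e) * c <= (1 - e) * X by apply: ler_wpM2l; [lra | exact: ltW].
    lra.
  rewrite (min_r chX) addr_minr minA (min_r (ltW cX)) minC.
  by congr Num.min; lra.
Qed.

Section ParallelBayesRisk.
Variables (R : realFieldType) (n : nat) (CF : R) (CR : 'I_n.+1 -> R).
Hypothesis CR_ge0 : forall m, 0 <= CR m.

Definition cheapest_repair : R := \big[Num.min/CR ord0]_(m < n.+1) CR m.
Definition no_action : action n.+1 := [ffun => false].
Definition repair_cost (A : action n.+1) : R := \sum_(m < n.+1) (A m)%:R * CR m.

Lemma cheapest_repair_le m : cheapest_repair <= CR m.
Proof. exact: bigmin_le. Qed.

Lemma cheapest_repair_attained : exists m, cheapest_repair = CR m.
Proof.
apply: (big_ind (fun x => exists m, x = CR m)); first by exists ord0.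
  by move=> _ _ [i ->] [j ->]; rewrite minEle; case: ifP; eexists.
by move=> i _; exists i.
Qed.

Lemma cheapest_repair_ge0 : 0 <= cheapest_repair.
Proof. by have [m ->] := cheapest_repair_attained. Qed.

Lemma replaces_some A : A != no_action -> exists m, A m.
Proof.
move=> A_neq; apply/existsP; apply: contraR A_neq; rewrite negb_exists.
by move=> /forallP A_false; apply/eqP/ffunP => m; rewrite ffunE; apply/negbTE.
Qed.

Lemma loss_par s A : loss CF CR s A =
  if A == no_action then CF * (~~ phi_par s)%:R else repair_cost A.
Proof.
rewrite /loss; have [->|/replaces_some [m Am]] := eqVneq A no_action.
  rewrite big1 ?addr0 => [|m _]; last by rewrite ffunE mul0r.
  by congr (_ * (~~ phi_par _)%:R); apply/ffunP => m; rewrite !ffunE.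
have -> : phi_par (post s A) by apply/existsP; exists m; rewrite ffunE Am.
by rewrite mulr0 add0r.
Qed.

Lemma cheapest_repair_le_cost A : A != no_action -> cheapest_repair <= repair_cost A.
Proof.
move=> /replaces_some [m Am]; rewrite /repair_cost (bigD1 m) //= Am mul1r.
rewrite (le_trans (cheapest_repair_le m)) // lerDl.
by apply: sumr_ge0 => i _; rewrite mulr_ge0 ?ler0n.
Qed.

Lemma repair_cost_single m : repair_cost [ffun i => i == m] = CR m.
Proof.
rewrite /repair_cost (bigD1 m) //= ffunE eqxx mul1r big1 ?addr0 // => i.
by rewrite ffunE => /negbTE ->; rewrite mul0r.
Qed.

Lemma single_neq_no_action m : [ffun i => i == m] != no_action.
Proof. by apply/eqP => /ffunP /(_ m); rewrite !ffunE eqxx. Qed.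

Lemma min_expected_loss_par (w : state n.+1 -> R) : \sum_s w s = 1 ->
  Defs.minA (fun A => \sum_s w s * loss CF CR s A) =
  lstar_par CF CR (\sum_s w s * (~~ phi_par s)%:R).
Proof.
move=> w_sum1; rewrite /lstar_par -/cheapest_repair.
set pf := \sum_s _ * _.
have loss_none : \sum_s w s * loss CF CR s no_action = CF * pf.
  by rewrite mulr_sumr; apply: eq_bigr => s _; rewrite loss_par eqxx mulrCA.
have loss_some A : A != no_action -> \sum_s w s * loss CF CR s A = repair_cost A.
  move=> A_neq; rewrite -[RHS]mulr1 -w_sum1 mulr_sumr.
  by apply: eq_bigr => s _; rewrite loss_par (negbTE A_neq) mulrC.
apply: minA_eq => [A|].
  have [->|A_neq] := eqVneq A no_action; first by rewrite loss_none ge_min lexx.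
  by rewrite loss_some // ge_min cheapest_repair_le_cost ?orbT.
have [_|_] := leP (CF * pf) cheapest_repair; first by exists no_action.
have [m ->] := cheapest_repair_attained.
by exists [ffun i => i == m]; rewrite loss_some ?single_neq_no_action ?repair_cost_single.
Qed.

Lemma wterm_lstar_par (h x : R) : 0 <= CF -> 0 <= h -> 0 <= x ->
  wterm h (lstar_par CF CR (x / h)) = Num.min (CF * x) (cheapest_repair * h).
Proof.
move=> CF_ge0 h_ge0 x_ge0; rewrite /wterm /lstar_par -/cheapest_repair.
have [->|h_neq0] := eqVneq h 0.
  by rewrite mulr0 min_r // mulr_ge0.
by rewrite minr_pMr // mulrCA [h * (x / h)]mulrC divfK // [h * _]mulrC.
Qed.

Section Inspection.
Variables (P : {ffun state n.+1 -> R}) (eFA eFS : R).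
Hypothesis P_sum1 : \sum_s P s = 1.

Lemma L_prior_par : L_prior P CF CR = lstar_par CF CR (p_pi P).
Proof. exact: min_expected_loss_par. Qed.

Lemma L_post_par k b : pobs P eFA eFS k b != 0 ->
  L_post P eFA eFS CF CR k b = lstar_par CF CR (p_post P eFA eFS k b).
Proof.
move=> pobs_neq0; set w := fun s => P s * lik eFA eFS b (s k) / pobs P eFA eFS k b.
have sum_div f : (\sum_s P s * lik eFA eFS b (s k) * f s) / pobs P eFA eFS k b =
                 \sum_s w s * f s.
  by rewrite mulr_suml; apply: eq_bigr => s _; rewrite mulrAC.
have w_sum1 : \sum_s w s = 1.
  by rewrite /w -mulr_suml -/(pobs P eFA eFS k b) divff.
rewrite /L_post (eq_minA (G := fun A => \sum_s w s * loss CF CR s A)) => [|A].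
  by rewrite min_expected_loss_par // /p_post sum_div.
exact: sum_div.
Qed.

Lemma wterm_L_post k b :
  wterm (pobs P eFA eFS k b) (L_post P eFA eFS CF CR k b) =
  wterm (pobs P eFA eFS k b) (lstar_par CF CR (p_post P eFA eFS k b)).
Proof. by rewrite /wterm; case: eqP => // /eqP /L_post_par ->. Qed.

Lemma VoI_L_eq_VoI_G k :
  VoI_L P eFA eFS CF CR k = VoI_G P eFA eFS (lstar_par CF CR) k.
Proof. by rewrite /VoI_L /VoI_G /L_omega L_prior_par !wterm_L_post. Qed.

Hypothesis P_ge0 : forall s : state n.+1, 0 <= P s.
Hypotheses (eFA_ge0 : 0 <= eFA) (eFS_ge0 : 0 <= eFS) (eFA_eFS_le1 : eFA + eFS <= 1).
Hypothesis CF_ge0 : 0 <= CF.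

Lemma pfail_le1 k : pfail P k <= 1.
Proof.
rewrite -P_sum1; apply: ler_sum => s _.
by rewrite ler_piMr // lern1 leq_b1.
Qed.

Lemma p_pi_ge0 : 0 <= p_pi P.
Proof. by apply: sumr_ge0 => s _; rewrite mulr_ge0 ?ler0n. Qed.

Lemma noise_gap_ge0 : 0 <= 1 - eFS - eFA.
Proof. by rewrite -addrA -opprD subr_ge0 addrC. Qed.

Lemma lik_ge0 b x : 0 <= lik eFA eFS b x.
Proof.
move: eFA_ge0 eFS_ge0 noise_gap_ge0; rewrite /lik.
by case: b; case: x => /=; lra.
Qed.

Lemma pobs_ge0 k b : 0 <= pobs P eFA eFS k b.
Proof. by apply: sumr_ge0 => s _; rewrite mulr_ge0 ?lik_ge0. Qed.

Lemma lik_alarm x : lik eFA eFS false x = eFA + (1 - eFS - eFA) * (~~ x)%:R.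
Proof. by rewrite /lik; case: x => /=; lra. Qed.

Lemma lik_silence_add_alarm x : lik eFA eFS true x + lik eFA eFS false x = 1.
Proof. by rewrite /lik; case: x => /=; lra. Qed.

Lemma pobs_alarm k : pobs P eFA eFS k false = eFA + (1 - eFS - eFA) * pfail P k.
Proof.
rewrite /pobs /pfail; under eq_bigr => s _ do rewrite lik_alarm mulrDr.
rewrite big_split /= -mulr_suml P_sum1 mul1r mulr_sumr.
by congr (_ + _); apply: eq_bigr => s _; rewrite mulrCA.
Qed.

Lemma pobs_silence k : pobs P eFA eFS k true = 1 - pobs P eFA eFS k false.
Proof.
rewrite -P_sum1 /pobs -sumrB; apply: eq_bigr => s _.
by apply/eqP; rewrite eq_sym subr_eq -mulrDr lik_silence_add_alarm mulr1.
Qed.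

Lemma pobs_alarm_le1 k : pobs P eFA eFS k false <= 1 - eFS.
Proof. by rewrite pobs_alarm -lerBrDl ler_piMr ?noise_gap_ge0 ?pfail_le1. Qed.

Lemma sum_lik_system_failure k b :
  \sum_s P s * lik eFA eFS b (s k) * (~~ phi_par s)%:R = lik eFA eFS b false * p_pi P.
Proof.
rewrite /p_pi mulr_sumr; apply: eq_bigr => s _.
case phi_s: (phi_par s); first by rewrite !mulr0.
have -> : s k = false.
  by move/negbT: phi_s; rewrite negb_exists => /forallP /(_ k) /negbTE.
by rewrite mulrCA mulrA.
Qed.

Lemma L_omega_par k : L_omega P eFA eFS CF CR k =
  Num.min (CF * p_pi P)
    (Num.min cheapest_repair (cheapest_repair * pobs P eFA eFS k false + eFS * (CF * p_pi P))).
Proof.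
rewrite /L_omega !wterm_L_post /p_post !sum_lik_system_failure.
rewrite !wterm_lstar_par ?pobs_ge0 ?mulr_ge0 ?lik_ge0 ?p_pi_ge0 //= !(mulrCA CF).
by rewrite pobs_silence min_add_min_eq_min3 ?mulr_ge0 ?p_pi_ge0 ?pobs_ge0
           ?pobs_alarm_le1 ?cheapest_repair_ge0.
Qed.

Lemma pobs_alarm_le i j : pfail P i <= pfail P j ->
  pobs P eFA eFS i false <= pobs P eFA eFS j false.
Proof. by move=> pij; rewrite !pobs_alarm lerD2l ler_wpM2l ?noise_gap_ge0. Qed.

Lemma VoI_L_antimono_pfail i j : pfail P i <= pfail P j ->
  VoI_L P eFA eFS CF CR j <= VoI_L P eFA eFS CF CR i.
Proof.
move=> /pobs_alarm_le alarm_le; rewrite /VoI_L !L_omega_par lerD2l lerN2.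
by rewrite !le_min2 // lerD2r ler_wpM2l ?cheapest_repair_ge0.
Qed.

End Inspection.
End ParallelBayesRisk.

Theorem mainTheorem4 (R : realFieldType) (n : nat)
  (P : {ffun state n.+1 -> R})
  (P_ge0 : forall s, 0 <= P s) (P_sum1 : \sum_(s : state n.+1) P s = 1)
  (eFA eFS CF : R) (CR : 'I_n.+1 -> R)
  (heFA : 0 <= eFA < 1 / 2) (heFS : 0 <= eFS < 1 / 2)
  (hCF : 0 < CF) (hCR : forall m, 0 <= CR m) :
  (forall k : 'I_n.+1,
     VoI_L P eFA eFS CF CR k = VoI_G P eFA eFS (lstar_par CF CR) k) /\
  (forall i j : 'I_n.+1,
     pfail P i <= pfail P j -> VoI_L P eFA eFS CF CR j <= VoI_L P eFA eFS CF CR i).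
Proof.
have [eFA_ge0 eFA_lt] := andP heFA; have [eFS_ge0 eFS_lt] := andP heFS.
have eFA_eFS_le1 : eFA + eFS <= 1 by lra.
split=> [k|]; first exact: VoI_L_eq_VoI_G.
by apply: VoI_L_antimono_pfail => //; apply: ltW.
Qed.
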